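(* Let $p$, $F$, $K$, $G=\langle\sigma\rangle$, $J$, $J_1$, $\epsilon(F^\times)$ be as in the context. (a) If $\xi_p\notin N(K^\times)$, then $J_1=\epsilon(F^\times)$. (b) If $\xi_p\in N(K^\times)$, then there exist $\lambda,\delta\in K^\times$ with $N_{K/F}(\lambda)=\xi_p$ and $\sigma(\delta)/\delta=\lambda^p$, and for any such $\delta$ one has $J_1=\epsilon(F^\times)\oplus\langle[\delta]\rangle$ (internal direct sum of $\mathbb{F}_p$-spaces).
   Context: Let $p$ be a prime and $F$ a field of characteristic different from $p$ containing a primitive $p$th root of unity $\xi_p$ (for $p=2$, $\xi_2=-1$). Let $a\in F^\times\setminus F^{\times p}$ and $K=F(\sqrt[p]{a})$; $K^\times=K\setminus\{0\}$. Let $G=\mathrm{Gal}(K/F)=\langle\sigma\rangle$, where $\sigma(\sqrt[p]{a})/\sqrt[p]{a}=\xi_p$. Let $J=K^\times/K^{\times p}$ with elements $[\gamma]$, $J_1=J^G=\ker(\sigma-1)$ the $G$-fixed submodule, and $\epsilon(F^\times)=F^\times K^{\times p}/K^{\times p}\subseteq J$ the image of $F^\times$. $N(K^\times)$ denotes the norm group $N_{K/F}(K^\times)\subseteq F^\times$. *)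

From HB Require Import structures.
From mathcomp Require Import all_boot all_order all_algebra all_field.
Set Implicit Arguments. Unset Strict Implicit. Unset Printing Implicit Defensive.
Import GRing.Theory.
Local Open Scope ring_scope.

(* Setting: L is a field extension of F (K in the paper); elements of F are
   embedded in L as f%:A.  J = L^x / L^xp is described through representatives:
   classes are determined by the relation x ~ y iff x/y is a p-th power of a
   nonzero element. *)

Section Kummer.
Variables (F : fieldType) (L : fieldExtType F).

Definition isPthPow (p : nat) (x : L) := exists b : L, b != 0 /\ x = b ^+ p.

(* [gam] lies in J_1 = ker(sigma - 1) : sigma[gam] = [gam] in J *)
Definition inJ1 (p : nat) (sigma : L -> L) (gam : L) :=
  gam != 0 /\ isPthPow p (sigma gam / gam).

Definition inEps (p : nat) (gam : L) :=
  gam != 0 /\ exists f : F, f != 0 /\ isPthPow p (gam / f%:A).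

(* [gam] lies in eps(F^x) . <[delta]> (the subgroup generated by eps(F^x)
   and [delta]; J has exponent p so <[delta]> = {[delta^k] | k < p}) *)
Definition inEpsDelta (p : nat) (delta gam : L) :=
  gam != 0 /\ exists k : nat, (k < p)%N /\
    exists f : F, f != 0 /\ isPthPow p (gam / (f%:A * delta ^+ k)).
End Kummer.

From HB Require Import structures.
From mathcomp Require Import all_boot all_order all_algebra all_field.
From mathcomp Require Import all_fingroup cyclic ring.
Set Implicit Arguments. Unset Strict Implicit. Unset Printing Implicit Defensive.
Import GRing.Theory.
Local Open Scope ring_scope.

(* Since [sigma alpha = xi alpha] and [[K : F] <= p], sigma generates
   Gal(K/F), which is cyclic of order p; write N for the norm of K/F.
   If [sigma gam / gam = b^p] then [N b] is a p-th root of unity, say [xi^i].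
   Whenever [sigma u / u = w^p] with [N w = N b], Hilbert 90 applied to
   [b / w] yields [c] with [b = w * sigma c / c], so [gam / (u c^p)] is
   sigma-invariant, i.e. lies in F^x: the class of [gam] is that of [u]
   modulo eps(F^x).  If xi is not a norm, then [i = 0] and one takes [u = 1];
   otherwise [u = delta^i], [w = lam^i].  Conversely, if [delta^k] lies in
   eps(F^x) then [N (lam^k)], which is [xi^k], equals 1, so p divides k. *)

Lemma alg_eq0 (F : fieldType) (L : fieldExtType F) (f : F) :
  ((f%:A : L) == 0) = (f == 0).
Proof. by rewrite scaler_eq0 oner_eq0 orbF. Qed.

Section KummerExtension.

Variables (F : fieldType) (K : splittingFieldType F) (p : nat) (xi a : F).
Variables (alpha : K) (sigma : gal_of (fullv : {vspace K})).
Hypotheses (prime_p : prime p) (xi_prim : p.-primitive_root xi) (a_neq0 : a != 0).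
Hypotheses (alpha_p : alpha ^+ p = a%:A) (alpha_gen : <<1; alpha>>%VS = fullv).
Hypothesis sigma_alpha : sigma alpha = xi%:A * alpha.

Lemma kummer_gal_expg k : (sigma ^+ k)%g alpha = (xi ^+ k)%:A * alpha.
Proof.
elim: k => [|k IHk]; first by rewrite expg0 gal_id expr0 scale1r mul1r.
rewrite expgSr galM ?memvf // IHk rmorphM /= rmorph_alg sigma_alpha exprSr.
by rewrite !mulr_algl scalerA mulrC.
Qed.

Lemma kummer_alpha_neq0 : alpha != 0.
Proof.
apply: contraNneq a_neq0 => alpha0.
by rewrite -(@alg_eq0 _ K) -alpha_p alpha0 expr0n gtn_eqF ?prime_gt0.
Qed.

Lemma kummer_order_dvd : (p %| #[sigma]%g)%N.
Proof.
rewrite (prim_order_dvd xi_prim) -(fmorph_eq1 (in_alg K)) /=.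
have := kummer_gal_expg #[sigma]%g; rewrite expg_order gal_id -{1}[alpha]mul1r.
by move/(mulIf kummer_alpha_neq0) => <-.
Qed.

Lemma kummer_dimv_le : (\dim (fullv : {vspace K}) <= p)%N.
Proof.
have p_gt0 := prime_gt0 prime_p.
rewrite -alpha_gen dim_Fadjoin dimv1 muln1 -ltnS -(size_minPoly 1 alpha).
rewrite -(size_XnsubC (a%:A : K) p_gt0) dvdp_leq ?minPoly_dvdp //.
- by rewrite -size_poly_eq0 size_XnsubC.
- by rewrite rpredB ?rpredX ?polyOverX ?polyOverC ?rpredZ ?mem1v.
- by rewrite /root !hornerE alpha_p subrr.
Qed.

Lemma kummer_cyclic : fixedField [set sigma] = 1%VS /\ #[sigma]%g = p.
Proof.
set M := fixedField [set sigma].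
have dimM : \dim_M (fullv : {vspace K}) = #[sigma]%g.
  by rewrite galois_dim ?fixedField_galois // gal_generated.
have dim_full := dim_sup_field (subvf M); rewrite dimM in dim_full.
have p_le : (p <= #[sigma]%g)%N by rewrite dvdn_leq ?order_gt0 ?kummer_order_dvd.
have dimM_gt0 : (0 < \dim M)%N by rewrite adim_gt0.
have le_full := kummer_dimv_le; rewrite dim_full in le_full.
have order_p : #[sigma]%g = p.
  apply/eqP; rewrite eqn_leq p_le andbT.
  by apply: leq_trans le_full; rewrite leq_pmulr.
have dimM1 : \dim M = 1%N.
  apply/eqP; rewrite eqn_leq dimM_gt0 andbT -(leq_pmul2l (prime_gt0 prime_p)).
  by rewrite muln1 -{1}order_p.
by split=> //; apply/eqP; rewrite eq_sym eqEdim sub1v dimv1 dimM1.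
Qed.

End KummerExtension.

Section PthPowerClasses.

Variables (F : fieldType) (K : splittingFieldType F) (p : nat) (xi : F).
Variable sigma : gal_of (fullv : {vspace K}).
Hypotheses (prime_p : prime p) (xi_prim : p.-primitive_root xi).
Hypothesis fixedField_sigma : fixedField [set sigma] = 1%VS.
Hypothesis order_sigma : #[sigma]%g = p.

Local Notation N := (galNorm 1 fullv).

Lemma gal_sigma : 'Gal(fullv / 1%VS)%g = <[sigma]>%g.
Proof. by rewrite -fixedField_sigma gal_generated. Qed.

Lemma sigma_fixed_scalar (x : K) : sigma x = x -> exists f : F, x = f%:A.
Proof.
move=> sx; have : x \in fixedField [set sigma].
  by apply/fixedFieldP=> [|y /set1P ->]; rewrite ?memvf.
by rewrite fixedField_sigma => /vlineP[f ->]; exists f.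
Qed.

Lemma galNorm_sigma (x : K) : N (sigma x) = N x.
Proof. by rewrite galNorm_gal ?memvf // gal_sigma cycle_id. Qed.

Lemma galNorm_scalar (f : F) : N (f%:A : K) = (f ^+ p)%:A.
Proof.
rewrite /galNorm (eq_bigr (fun=> f%:A : K)) => [|s _]; last exact: rmorph_alg.
by rewrite prodr_const gal_sigma -order_sigma -(rmorphXn (in_alg K)).
Qed.

Lemma sigma_hilbert90 (b : K) : N b = 1 -> exists2 c, c != 0 & sigma c / c = b.
Proof.
have gen_sigma : generator 'Gal(fullv / 1%VS)%g sigma by rewrite /generator gal_sigma.
move/eqP/(Hilbert's_theorem_90 gen_sigma (memvf b)) => -[c [_ c0] ->].
by exists c^-1; rewrite ?invr_eq0 // fmorphV invrK mulrC.
Qed.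

Lemma scalar_root_unity (z : K) : z ^+ p = 1 -> exists i : 'I_p, z = (xi ^+ i)%:A.
Proof.
move=> zp1; have xi_primK : p.-primitive_root (in_alg K xi).
  by rewrite fmorph_primitive_root.
by have [i ->] := prim_rootP xi_primK zp1; exists i; rewrite -(rmorphXn (in_alg K)).
Qed.

Lemma galNorm_ratio_root (gam b : K) : gam != 0 -> sigma gam / gam = b ^+ p ->
  exists i : 'I_p, N b = (xi ^+ i)%:A.
Proof.
move=> gam0 sgam; apply: scalar_root_unity.
by rewrite -galNormX -sgam galNormM galNormV galNorm_sigma divff ?galNorm_eq0.
Qed.

Lemma sigma_ratioX (u w : K) k : sigma u / u = w ^+ p ->
  sigma (u ^+ k) / u ^+ k = (w ^+ k) ^+ p.
Proof. by move=> su; rewrite rmorphXn -expr_div_n su exprAC. Qed.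

Definition in_eps_coset (u gam : K) :=
  exists f : F, f != 0 /\ isPthPow p (gam / (f%:A * u)).

Lemma inEpsE (gam : K) : inEps p gam <-> gam != 0 /\ in_eps_coset 1 gam.
Proof.
by split=> -[gam0 [f [f0 gam_f]]]; split=> //; exists f; rewrite mulr1 in gam_f *.
Qed.

Lemma inJ1_of_eps_coset (u w gam : K) : u != 0 -> w != 0 -> sigma u / u = w ^+ p ->
  gam != 0 -> in_eps_coset u gam -> inJ1 p sigma gam.
Proof.
move=> u0 w0 su gam0 [f [f0 [c [c0 Egam]]]]; split=> //.
have fA0 : (f%:A : K) != 0 by rewrite alg_eq0.
have sc0 : sigma c != 0 by rewrite fmorph_eq0.
have -> : gam = f%:A * u * c ^+ p by rewrite -Egam mulrC divfK ?mulf_neq0.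
have sigma_u : sigma u = w ^+ p * u by rewrite -su divfK.
exists (w * (sigma c / c)); split; first by rewrite !mulf_neq0 ?invr_eq0.
rewrite !rmorphM rmorphXn /= rmorph_alg sigma_u.
by rewrite exprMn expr_div_n; field; rewrite expf_neq0 ?u0.
Qed.

Lemma eps_coset_of_galNorm (u w gam b : K) : u != 0 -> w != 0 -> gam != 0 ->
  sigma u / u = w ^+ p -> sigma gam / gam = b ^+ p -> N b = N w ->
  in_eps_coset u gam.
Proof.
move=> u0 w0 gam0 su sgam Nbw.
have Nw0 : N w != 0 by rewrite galNorm_eq0.
have [c c0 Ebw] : exists2 c, c != 0 & sigma c / c = b / w.
  by apply: sigma_hilbert90; rewrite galNormM galNormV Nbw divff.
have sc0 : sigma c != 0 by rewrite fmorph_eq0.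
have sigma_u : sigma u = w ^+ p * u by rewrite -su divfK.
have sigma_gam : sigma gam = (w * (sigma c / c)) ^+ p * gam.
  by rewrite Ebw [w * _]mulrC divfK // -sgam divfK.
have [f Ef] : exists f : F, gam / (u * c ^+ p) = f%:A.
  apply: sigma_fixed_scalar; rewrite fmorph_div rmorphM rmorphXn /= sigma_u sigma_gam.
  by rewrite exprMn expr_div_n; field; rewrite !expf_neq0 ?u0.
have f0 : f != 0.
  rewrite -(fmorph_eq0 (in_alg K)) /= -Ef.
  by rewrite mulf_neq0 ?invr_eq0 ?mulf_neq0 ?expf_neq0.
exists f; split=> //; exists c; split=> //.
by rewrite -Ef; field; rewrite expf_neq0 ?u0.
Qed.

Lemma galNorm_ratio_eps (u w : K) : inEps p u -> sigma u / u = w ^+ p -> N w = 1.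
Proof.
move=> [u0 [f [f0 [c [c0 Ec]]]]] su.
have fA0 : (f%:A : K) != 0 by rewrite alg_eq0.
have sc0 : sigma c != 0 by rewrite fmorph_eq0.
have Eu : u = f%:A * c ^+ p by rewrite -Ec mulrC divfK.
have [i Ei] : exists i : 'I_p, w * c / sigma c = (xi ^+ i)%:A.
  apply: scalar_root_unity; rewrite !exprMn exprVn -su Eu rmorphM rmorphXn /= rmorph_alg.
  by field; rewrite !expf_neq0.
have := congr1 N Ei.
rewrite galNorm_scalar exprAC (prim_expr_order xi_prim) expr1n scale1r.
by rewrite galNormM galNormV galNormM galNorm_sigma mulfK // galNorm_eq0.
Qed.

Lemma galNorm_xi_of_root (b : K) (i : 'I_p) : N b = (xi ^+ i)%:A -> i != 0 :> nat ->
  exists x : K, x != 0 /\ N x = xi%:A.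
Proof.
move=> Nb i0.
have xi0 : xi != 0 by rewrite (prim_root_eq0 xi_prim) -lt0n prime_gt0.
have b0 : b != 0 by rewrite -(galNorm_eq0 1%VS fullv) Nb alg_eq0 expf_neq0.
have i_coprime : coprime i p.
  by rewrite coprime_sym prime_coprime // gtnNdvd ?lt0n.
have xi_i_prim : p.-primitive_root (xi ^+ i) by rewrite prim_root_exp_coprime.
have [j xi_j] := prim_rootP xi_i_prim (prim_expr_order xi_prim).
by exists (b ^+ j); rewrite expf_neq0 // galNormX Nb -(rmorphXn (in_alg K)) -xi_j.
Qed.

Lemma sigma_ratio1 : sigma 1 / 1 = 1 ^+ p :> K.
Proof. by rewrite rmorph1 divr1 expr1n. Qed.

Lemma inJ1_iff_inEps : ~ (exists x : K, x != 0 /\ N x = xi%:A) ->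
  forall gam : K, inJ1 p sigma gam <-> inEps p gam.
Proof.
move=> xi_not_norm gam; rewrite inEpsE; split=> [[gam0 [b [b0 sgam]]] | [gam0]].
  have [i Ni] := galNorm_ratio_root gam0 sgam.
  have [i0 | /(galNorm_xi_of_root Ni)//] := eqVneq (i : nat) 0%N.
  split=> //; apply: eps_coset_of_galNorm (oner_neq0 K) (oner_neq0 K) gam0
    sigma_ratio1 sgam _.
  by rewrite Ni i0 expr0 scale1r galNorm1.
exact: inJ1_of_eps_coset (oner_neq0 K) (oner_neq0 K) sigma_ratio1 gam0.
Qed.

Lemma exists_ratio_delta (lam : K) : N lam = xi%:A ->
  exists2 delta : K, delta != 0 & sigma delta / delta = lam ^+ p.
Proof.
move=> Nlam; apply: sigma_hilbert90.
by rewrite galNormX Nlam -(rmorphXn (in_alg K)) (prim_expr_order xi_prim) rmorph1.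
Qed.

Section Delta.

Variables lam delta : K.
Hypotheses (lam_neq0 : lam != 0) (delta_neq0 : delta != 0).
Hypotheses (galNorm_lam : N lam = xi%:A) (ratio_delta : sigma delta / delta = lam ^+ p).

Lemma inJ1_iff_inEpsDelta (gam : K) : inJ1 p sigma gam <-> inEpsDelta p delta gam.
Proof.
split=> [[gam0 [b [b0 sgam]]] | [gam0 [k [_ coset_k]]]].
  have [i Ni] := galNorm_ratio_root gam0 sgam.
  split=> //; exists i; split=> //.
  apply: eps_coset_of_galNorm (expf_neq0 i delta_neq0) (expf_neq0 i lam_neq0) gam0
    (sigma_ratioX i ratio_delta) sgam _.
  by rewrite galNormX galNorm_lam -(rmorphXn (in_alg K)).
exact: inJ1_of_eps_coset (expf_neq0 k delta_neq0) (expf_neq0 k lam_neq0)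
  (sigma_ratioX k ratio_delta) gam0 coset_k.
Qed.

Lemma inEps_deltaX_dvd k : inEps p (delta ^+ k) -> (p %| k)%N.
Proof.
move/galNorm_ratio_eps/(_ (sigma_ratioX k ratio_delta))/eqP.
rewrite galNormX galNorm_lam -(rmorphXn (in_alg K)) fmorph_eq1.
by rewrite -(prim_order_dvd xi_prim).
Qed.

End Delta.

End PthPowerClasses.

Theorem lemma2 (F : fieldType) (K : splittingFieldType F) (p : nat) (xi a : F)
    (alpha : K) (sigma : gal_of (fullv : {vspace K})) :
  prime p ->
  (p%:R : F) != 0 ->
  p.-primitive_root xi ->
  a != 0 -> ~ (exists b : F, a = b ^+ p) ->
  alpha ^+ p = a%:A -> <<1; alpha>>%VS = fullv ->
  sigma alpha = xi%:A * alpha ->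
  (~ (exists x : K, x != 0 /\ galNorm 1 fullv x = xi%:A) ->
     forall gam : K, inJ1 p sigma gam <-> inEps p gam) /\
  ((exists x : K, x != 0 /\ galNorm 1 fullv x = xi%:A) ->
     (exists lam delta : K, lam != 0 /\ delta != 0 /\
        galNorm 1 fullv lam = xi%:A /\ sigma delta / delta = lam ^+ p) /\
     (forall lam delta : K, lam != 0 -> delta != 0 ->
        galNorm 1 fullv lam = xi%:A -> sigma delta / delta = lam ^+ p ->
        (forall gam : K, inJ1 p sigma gam <-> inEpsDelta p delta gam) /\
        (forall k : nat, inEps p (delta ^+ k) -> (p %| k)%N))).
Proof.
(* [p%:R != 0] and [a \notin F^p] follow from the other hypotheses. *)
move=> prime_p _ xi_prim a0 _ alpha_p alpha_gen sigma_alpha.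
have [fix_sigma order_sigma] :=
  kummer_cyclic prime_p xi_prim a0 alpha_p alpha_gen sigma_alpha.
split; first exact: inJ1_iff_inEps prime_p xi_prim fix_sigma.
move=> [lam [lam0 Nlam]]; split.
  have [delta delta0 ratio_delta] := exists_ratio_delta xi_prim fix_sigma Nlam.
  by exists lam, delta.
move=> {}lam delta {}lam0 delta0 {}Nlam ratio_delta; split.
  exact: (inJ1_iff_inEpsDelta xi_prim fix_sigma lam0 delta0 Nlam ratio_delta).
move=> k; exact: (inEps_deltaX_dvd xi_prim fix_sigma order_sigma Nlam ratio_delta).
Qed.
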